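(* Let $X$ be a quasi-geodesic metric space and let $G\curvearrowright X$ be a cobounded quasi-action. Suppose that for $i=1,2$, $\rho_i:G\to\hat G_i$ are two topological completions of $G\curvearrowright X$. Then there exist compact normal subgroups $K_i\vartriangleleft\hat G_i$ ($i=1,2$) and an isomorphism of topological groups $\lambda:\hat G_1/K_1\to\hat G_2/K_2$ such that $\lambda\circ\pi_1\circ\rho_1=\pi_2\circ\rho_2$, where $\pi_i:\hat G_i\to\hat G_i/K_i$ are the quotient maps.
   Context: A metric space $X$ is quasi-geodesic if there are $K\ge1,A\ge0$ such that any two points can be joined by a chain $x_0,\dots,x_n$ with consecutive distances at most $A$ and $n\le Kd(x_0,x_n)+A$. A $(K,A)$-quasi-action of $G$ on $X$ assigns to each $g\in G$ a $(K,A)$-quasi-isometry $x\mapsto g\cdot x$ of $X$ with $d(h\cdot(g\cdot x),hg\cdot x)\le A$ and $d(e\cdot x,x)\le A$ for all $g,h,x$; it is cobounded if for some $r$, every $x,y$ admit $g$ with $d(g\cdot x,y)\le r$. A subset $T\subseteq G$ is bounded if $\{t\cdot x_0:t\in T\}$ is bounded for some (equivalently every) $x_0$. A topological completion is a homomorphism $\rho:G\to\hat G$ to a Hausdorff locally compact group with dense image such that for every $T\subseteq G$, $T$ is bounded iff $\overline{\rho(T)}$ is compact. *)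

From HB Require Import structures.
From mathcomp Require Import all_boot all_order all_algebra.
From mathcomp Require Import all_classical all_reals topology.
Set Implicit Arguments. Unset Strict Implicit. Unset Printing Implicit Defensive.
Import Order.TTheory GRing.Theory Num.Theory.
Local Open Scope classical_set_scope.
Local Open Scope ring_scope.

Record group_law (T : Type) := GroupLaw {
  gmul : T -> T -> T;
  ginv : T -> T;
  gone : T;
  gmulA : forall x y z, gmul x (gmul y z) = gmul (gmul x y) z;
  gmul1x : forall x, gmul gone x = x;
  gmulx1 : forall x, gmul x gone = x;
  gmulVx : forall x, gmul (ginv x) x = gone;
  gmulxV : forall x, gmul x (ginv x) = gone }.

Definition group_hom (T1 T2 : Type) (g1 : group_law T1) (g2 : group_law T2)
  (f : T1 -> T2) : Prop :=
  forall x y, f (gmul g1 x y) = gmul g2 (f x) (f y).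

Definition topgroup (T : topologicalType) (g : group_law T) : Prop :=
  continuous (fun p : T * T => gmul g p.1 p.2) /\ continuous (ginv g).

Definition subgroup (T : Type) (g : group_law T) (K : set T) : Prop :=
  K (gone g) /\ (forall x y, K x -> K y -> K (gmul g x (ginv g y))).

Definition normal_subgroup (T : Type) (g : group_law T) (K : set T) : Prop :=
  subgroup g K /\ (forall x k, K k -> K (gmul g (gmul g x k) (ginv g x))).

Definition coset (T : Type) (g : group_law T) (K : set T) (x : T) : set T :=
  [set gmul g x k | k in K].

Definition quot (T : Type) (g : group_law T) (K : set T) : Type :=
  {A : set T | exists x, A = coset g K x}.

Definition qmap (T : Type) (g : group_law T) (K : set T) (x : T) : quot g K :=
  exist _ (coset g K x) (ex_intro _ x erefl).

Definition qopen (T : topologicalType) (g : group_law T) (K : set T)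
  (U : set (quot g K)) : Prop := open (qmap g K @^-1` U).

(* isomorphism of topological groups G1/K1 -> G2/K2 (the group law on a
   quotient is the one induced by the projection: qmap x * qmap y = qmap (x*y)) *)
Definition quot_topgroup_iso (T1 T2 : topologicalType)
  (g1 : group_law T1) (g2 : group_law T2) (K1 : set T1) (K2 : set T2)
  (lam : quot g1 K1 -> quot g2 K2) : Prop :=
  (forall x y u v, lam (qmap g1 K1 x) = qmap g2 K2 u ->
     lam (qmap g1 K1 y) = qmap g2 K2 v ->
     lam (qmap g1 K1 (gmul g1 x y)) = qmap g2 K2 (gmul g2 u v)) /\
  exists mu : quot g2 K2 -> quot g1 K1,
    cancel lam mu /\ cancel mu lam /\
    (forall V, qopen V -> qopen (lam @^-1` V)) /\
    (forall U, qopen U -> qopen (mu @^-1` U)).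

Definition is_metric (R : realType) (X : Type) (d : X -> X -> R) : Prop :=
  (forall x y, 0 <= d x y) /\ (forall x y, d x y = 0 <-> x = y) /\
  (forall x y, d x y = d y x) /\ (forall x y z, d x z <= d x y + d y z).

Definition quasi_geodesic (R : realType) (X : Type) (d : X -> X -> R) : Prop :=
  exists (K A : R), 1 <= K /\ 0 <= A /\
  forall x y, exists (n : nat) (c : nat -> X),
    c 0%N = x /\ c n = y /\ (forall i, (i < n)%N -> d (c i) (c i.+1) <= A) /\
    n%:R <= K * d x y + A.

Definition quasi_isometry (R : realType) (X : Type) (d : X -> X -> R)
  (K A : R) (f : X -> X) : Prop :=
  (forall x y, K^-1 * d x y - A <= d (f x) (f y) /\ d (f x) (f y) <= K * d x y + A) /\
  (forall y, exists x, d (f x) y <= A).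

Definition quasi_action (R : realType) (X : Type) (d : X -> X -> R)
  (G : Type) (gG : group_law G) (act : G -> X -> X) : Prop :=
  exists (K A : R), 1 <= K /\ 0 <= A /\
  (forall g, quasi_isometry d K A (act g)) /\
  (forall g h x, d (act h (act g x)) (act (gmul gG h g) x) <= A) /\
  (forall x, d (act (gone gG) x) x <= A).

Definition cobounded (R : realType) (X : Type) (d : X -> X -> R)
  (G : Type) (act : G -> X -> X) : Prop :=
  exists r : R, forall x y, exists g, d (act g x) y <= r.

Definition qa_bounded (R : realType) (X : Type) (d : X -> X -> R)
  (G : Type) (act : G -> X -> X) (S : set G) : Prop :=
  exists (x0 : X) (r : R), forall t, S t -> d (act t x0) x0 <= r.

Definition topological_completion (R : realType) (X : Type) (d : X -> X -> R)
  (G : Type) (gG : group_law G) (act : G -> X -> X)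
  (H : topologicalType) (gH : group_law H) (rho : G -> H) : Prop :=
  topgroup gH /\ hausdorff_space H /\ locally_compact [set: H] /\
  group_hom gG gH rho /\ dense (range rho) /\
  (forall S : set G, qa_bounded d act S <-> compact (closure (rho @` S))).

From HB Require Import structures.
From mathcomp Require Import all_boot all_order all_algebra.
From mathcomp Require Import all_classical all_reals topology.
Set Implicit Arguments. Unset Strict Implicit. Unset Printing Implicit Defensive.
Local Open Scope classical_set_scope.

(** Only one consequence of the hypotheses is used: a subset of G has
   relatively compact image under rho1 iff it has under rho2 (both mean
   "bounded"); the metric data and the Hausdorff property play no further
   role.  Let Gamma be the closure in H1 x H2 of the graph
   {(rho1 g, rho2 g) | g in G}; it is a subgroup.  If C is a compact
   neighbourhood of x in H1, then rho2 (rho1^-1 C) is relatively compact, so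
   the points of Gamma above a neighbourhood of x have second coordinates in a
   compact set.  With density of rho1 this yields, for every x, some y with
   (x, y) in Gamma, and it makes K1 = {k | (k, 1) in Gamma} compact; K1 and
   K2 = {k | (1, k) in Gamma} are normal.  Hence (x, y) in Gamma defines a
   homomorphism H1/K1 -> H2/K2, whose inverse is the same construction with
   the roles exchanged; the same compactness argument gives continuity. *)

Section GroupLaw.
Variables (T : Type) (g : group_law T).
Local Notation "x * y" := (gmul g x y).
Local Notation "x ^-1" := (ginv g x).
Local Notation "1" := (gone g).

Lemma ginv1 : 1^-1 = 1.
Proof. by rewrite -[LHS](gmul1x g) gmulxV. Qed.

Lemma ginv_uniq x y : x * y = 1 -> x = y^-1.
Proof. by move=> e; rewrite -[x](gmulx1 g) -(gmulxV g y) (gmulA g) e gmul1x. Qed.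

Lemma ginvK x : (x^-1)^-1 = x.
Proof. by symmetry; apply: ginv_uniq; rewrite gmulxV. Qed.

Lemma qmap_surj (K : set T) (q : quot g K) : exists x, q = qmap g K x.
Proof. by case: q => A [x e]; exists x; apply: eq_exist. Qed.

Variables (K : set T) (sgK : subgroup g K).

Lemma subgroupV x : K x -> K x^-1.
Proof. by move=> Kx; rewrite -[x^-1](gmul1x g); apply: sgK.2 => //; apply: sgK.1. Qed.

Lemma subgroupM x y : K x -> K y -> K (x * y).
Proof. by move=> Kx Ky; rewrite -[y]ginvK; apply: sgK.2 => //; apply: subgroupV. Qed.

Lemma mem_coset x : coset g K x x.
Proof. by exists 1; [apply: sgK.1 | rewrite gmulx1]. Qed.

Lemma coset_eq_mulr x y : coset g K x = coset g K y -> exists2 k, K k & y = x * k.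
Proof.
move=> e; have : coset g K x y by rewrite e; apply: mem_coset.
by case=> k Kk <-; exists k.
Qed.

Lemma qmap_mulr x k : K k -> qmap g K (x * k) = qmap g K x.
Proof.
move=> Kk; apply: eq_exist; rewrite eqEsubset; split=> _ [k' Kk' <-].
  by exists (k * k'); [apply: subgroupM | rewrite gmulA].
exists (k^-1 * k'); first by apply: subgroupM => //; apply: subgroupV.
by rewrite gmulA -(gmulA g x k) gmulxV gmulx1.
Qed.

End GroupLaw.

Lemma group_hom1 (T1 T2 : Type) (g1 : group_law T1) (g2 : group_law T2) f :
  group_hom g1 g2 f -> f (gone g1) = gone g2.
Proof.
move=> hf; have e : f (gone g1) = gmul g2 (f (gone g1)) (f (gone g1)).
  by rewrite -hf gmul1x.
by rewrite -[LHS](gmul1x g2) -(gmulVx g2 (f (gone g1))) -gmulA -e.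
Qed.

Lemma group_homV (T1 T2 : Type) (g1 : group_law T1) (g2 : group_law T2) f x :
  group_hom g1 g2 f -> f (ginv g1 x) = ginv g2 (f x).
Proof. by move=> hf; apply: ginv_uniq; rewrite -hf gmulVx; apply: group_hom1. Qed.

Lemma topgroup_mul_nbhs (T : topologicalType) (g : group_law T) x y U :
  topgroup g -> nbhs (gmul g x y) U ->
  exists U1 U2, [/\ nbhs x U1, nbhs y U2 &
    forall a b, U1 a -> U2 b -> U (gmul g a b)].
Proof.
move=> [cmul _] nU; have [[U1 U2] /= [n1 n2] sU] := cmul (x, y) U nU.
by exists U1, U2; split => // a b a1 b2; apply: (sU (a, b)).
Qed.

Lemma topgroup_inv_nbhs (T : topologicalType) (g : group_law T) x U :
  topgroup g -> nbhs (ginv g x) U -> nbhs x (ginv g @^-1` U).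
Proof. by move=> [_ cinv]; apply: cinv. Qed.

(* [graph_cl r1 r2 x y]: the point (x, y) lies in the closure of the graph
   {(r1 g, r2 g) | g in G} in H1 x H2. *)
Definition graph_cl (G : Type) (H1 H2 : topologicalType)
    (r1 : G -> H1) (r2 : G -> H2) (x : H1) (y : H2) : Prop :=
  forall U V, nbhs x U -> nbhs y V -> exists g, U (r1 g) /\ V (r2 g).

Definition graph_cl_ker (G : Type) (H1 H2 : topologicalType) (g2 : group_law H2)
    (r1 : G -> H1) (r2 : G -> H2) : set H1 :=
  [set k | graph_cl r1 r2 k (gone g2)].

Lemma graph_cl_sym (G : Type) (H1 H2 : topologicalType)
    (r1 : G -> H1) (r2 : G -> H2) x y :
  graph_cl r1 r2 x y -> graph_cl r2 r1 y x.
Proof. by move=> cxy U V nU nV; have [g []] := cxy V U nV nU; exists g. Qed.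

Lemma graph_cl_fiber_closed (G : Type) (H1 H2 : topologicalType)
    (r1 : G -> H1) (r2 : G -> H2) y :
  closed [set x | graph_cl r1 r2 x y].
Proof.
move=> x clx U V; rewrite nbhsE => -[U0 [oU0 U0x] U0U] nV.
have [x' [cx'y U0x']] := clx _ (open_nbhs_nbhs (conj oU0 U0x)).
have [g [U0g Vg]] := cx'y _ _ (open_nbhs_nbhs (conj oU0 U0x')) nV.
by exists g; split => //; apply: U0U.
Qed.

Record compatible_completions (G : Type) (gG : group_law G)
    (H1 H2 : topologicalType) (g1 : group_law H1) (g2 : group_law H2)
    (r1 : G -> H1) (r2 : G -> H2) : Prop := CompatibleCompletions {
  cc_topgroup1 : topgroup g1;
  cc_topgroup2 : topgroup g2;
  cc_locally_compact1 : locally_compact [set: H1];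
  cc_locally_compact2 : locally_compact [set: H2];
  cc_hom1 : group_hom gG g1 r1;
  cc_hom2 : group_hom gG g2 r2;
  cc_dense1 : dense (range r1);
  cc_dense2 : dense (range r2);
  cc_compact12 : forall S : set G,
    compact (closure (r1 @` S)) -> compact (closure (r2 @` S));
  cc_compact21 : forall S : set G,
    compact (closure (r2 @` S)) -> compact (closure (r1 @` S)) }.

Lemma compatible_completionsC (G : Type) (gG : group_law G)
    (H1 H2 : topologicalType) (g1 : group_law H1) (g2 : group_law H2)
    (r1 : G -> H1) (r2 : G -> H2) :
  compatible_completions gG g1 g2 r1 r2 -> compatible_completions gG g2 g1 r2 r1.
Proof. by case=> *; constructor. Qed.

Lemma topological_completions_compatible (R : realType) (X : Type)
    (d : X -> X -> R) (G : Type) (gG : group_law G) (act : G -> X -> X)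
    (H1 : topologicalType) (g1 : group_law H1) (r1 : G -> H1)
    (H2 : topologicalType) (g2 : group_law H2) (r2 : G -> H2) :
  topological_completion d gG act g1 r1 -> topological_completion d gG act g2 r2 ->
  compatible_completions gG g1 g2 r1 r2.
Proof.
move=> [tg1 [_ [lc1 [hm1 [dn1 bd1]]]]] [tg2 [_ [lc2 [hm2 [dn2 bd2]]]]].
by constructor => // S cS; [apply/bd2/bd1 | apply/bd1/bd2].
Qed.

Section GraphClosure.
Variables (G : Type) (gG : group_law G) (H1 H2 : topologicalType)
  (g1 : group_law H1) (g2 : group_law H2) (r1 : G -> H1) (r2 : G -> H2).
Hypothesis cc : compatible_completions gG g1 g2 r1 r2.
Local Notation cl := (graph_cl r1 r2).

Lemma graph_cl_rho g : cl (r1 g) (r2 g).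
Proof. by move=> U V nU nV; exists g; split; apply: nbhs_singleton. Qed.

Lemma graph_cl_mul x y x' y' : cl x y -> cl x' y' -> cl (gmul g1 x x') (gmul g2 y y').
Proof.
move=> cxy cxy' U V nU nV.
have [U1 [U2 [n1 n2 sU]]] := topgroup_mul_nbhs (cc_topgroup1 cc) nU.
have [V1 [V2 [m1 m2 sV]]] := topgroup_mul_nbhs (cc_topgroup2 cc) nV.
have [a [a1 a2]] := cxy _ _ n1 m1; have [b [b1 b2]] := cxy' _ _ n2 m2.
exists (gmul gG a b); rewrite (cc_hom1 cc) (cc_hom2 cc).
by split; [apply: sU | apply: sV].
Qed.

Lemma graph_cl_inv x y : cl x y -> cl (ginv g1 x) (ginv g2 y).
Proof.
move=> cxy U V nU nV.
have [a [a1 a2]] := cxy _ _ (topgroup_inv_nbhs (cc_topgroup1 cc) nU)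
  (topgroup_inv_nbhs (cc_topgroup2 cc) nV).
by exists (ginv gG a); rewrite (group_homV _ (cc_hom1 cc)) (group_homV _ (cc_hom2 cc)).
Qed.

Lemma graph_cl1 : cl (gone g1) (gone g2).
Proof.
by rewrite -(group_hom1 (cc_hom1 cc)) -(group_hom1 (cc_hom2 cc)); apply: graph_cl_rho.
Qed.

Lemma graph_cl_locally_bounded x : exists B D,
  [/\ open B, B x, compact D & forall x' y, B x' -> cl x' y -> D y].
Proof.
have [C] := cc_locally_compact1 cc (I : [set: H1] x).
rewrite withinET nbhsE => -[B [oB Bx] BC] [cC clC].
pose S := r1 @^-1` C.
exists B, (closure (r2 @` S)); split => //.
  apply: (cc_compact12 cc); apply: (subclosed_compact _ cC); first exact: closed_closure.
  by rewrite (closure_id C).1 //; apply: closureS => _ [g Cg <-].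
move=> x' y Bx' cx'y V nV.
have [g [Bg Vg]] := cx'y _ _ (open_nbhs_nbhs (conj oB Bx')) nV.
by exists (r2 g); split => //; exists g => //; apply: BC.
Qed.

(* The sets [Y U] form a filter base of points lying over U; it has a cluster
   point z in the compact set of [graph_cl_locally_bounded], and z lies over x
   because Gamma is closed. *)
Lemma graph_cl_cluster x (Y : set H1 -> set H2) :
  (forall U U', U `<=` U' -> Y U `<=` Y U') ->
  (forall U, nbhs x U -> Y U !=set0) ->
  (forall U, Y U `<=` [set y | exists2 x', U x' & cl x' y]) ->
  exists z, cl x z /\ forall U V, nbhs x U -> nbhs z V -> Y U `&` V !=set0.
Proof.
move=> Ymono Yne Ysub.
have [B [D [oB Bx cD BD]]] := graph_cl_locally_bounded x.
pose F := filter_from (nbhs x) Y.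
have FF : ProperFilter F.
  apply: filter_from_proper => //; apply: filter_from_filter.
    by exists setT; apply: filterT.
  move=> U U' nU nU'; exists (U `&` U'); first exact: filterI.
  by move=> y Yy; split; apply: Ymono Yy => ? [].
have FD : F D.
  exists B; first exact: open_nbhs_nbhs.
  by move=> y /Ysub [x' Bx' cx'y]; apply: BD cx'y.
have [z [_ clz]] := cD F FF FD.
have meetY U V : nbhs x U -> nbhs z V -> Y U `&` V !=set0.
  by move=> nU nV; apply: clz => //; exists U.
exists z; split => // U V; rewrite !nbhsE => -[U0 [oU0 U0x] U0U] [V0 [oV0 V0z] V0V].
have [y [/Ysub [x' U0x' cx'y] V0y]] :=
  meetY _ _ (open_nbhs_nbhs (conj oU0 U0x)) (open_nbhs_nbhs (conj oV0 V0z)).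
have [g [U0g V0g]] :=
  cx'y _ _ (open_nbhs_nbhs (conj oU0 U0x')) (open_nbhs_nbhs (conj oV0 V0y)).
by exists g; split; [apply: U0U | apply: V0V].
Qed.

Lemma graph_cl_exists x : exists y, cl x y.
Proof.
pose Y U := r2 @` (r1 @^-1` U).
have [|U nU|U|z [cxz _]] := @graph_cl_cluster x Y; last by exists z.
- by move=> U U' sU _ [g Ug <-]; exists g => //; apply: sU.
- move: nU; rewrite nbhsE => -[B [oB Bx] BU].
  have [y [By [g _ egy]]] := cc_dense1 cc (ex_intro _ x Bx) oB.
  by exists (r2 g), g => //; apply: BU; rewrite egy.
- by move=> _ [g Ug <-]; exists (r1 g) => //; apply: graph_cl_rho.
Qed.

Local Notation K1 := (graph_cl_ker g2 r1 r2).

Lemma graph_cl_ker_normal : normal_subgroup g1 K1.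
Proof.
split; first split.
- exact: graph_cl1.
- move=> x y Kx Ky; rewrite /graph_cl_ker /= -[gone g2](gmulx1 g2) -{2}(ginv1 g2).
  by apply: graph_cl_mul => //; apply: graph_cl_inv.
- move=> x k Kk; have [y cxy] := graph_cl_exists x.
  rewrite /graph_cl_ker /= -(gmulxV g2 y) -{1}[y](gmulx1 g2).
  by apply: graph_cl_mul => //; [apply: graph_cl_mul | apply: graph_cl_inv].
Qed.

End GraphClosure.

Section QuotientMap.
Variables (G : Type) (gG : group_law G) (H1 H2 : topologicalType)
  (g1 : group_law H1) (g2 : group_law H2) (r1 : G -> H1) (r2 : G -> H2).
Hypothesis cc : compatible_completions gG g1 g2 r1 r2.
Local Notation cl := (graph_cl r1 r2).
Local Notation K1 := (graph_cl_ker g2 r1 r2).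
Local Notation K2 := (graph_cl_ker g1 r2 r1).

Lemma graph_cl_kerC k : K2 k <-> cl (gone g1) k.
Proof. by split; apply: graph_cl_sym. Qed.

Lemma graph_cl_ker_compact : compact K1.
Proof.
have [B [D [oB B1 cD BD]]] :=
  graph_cl_locally_bounded (compatible_completionsC cc) (gone g2).
apply: (subclosed_compact _ cD); first exact: graph_cl_fiber_closed.
by move=> k Kk; apply: BD B1 (graph_cl_sym Kk).
Qed.

Let sgK1 : subgroup g1 K1 := (graph_cl_ker_normal cc).1.
Let sgK2 : subgroup g2 K2 := (graph_cl_ker_normal (compatible_completionsC cc)).1.

Lemma graph_cl_mulr_ker1 x y k : cl x y -> K1 k -> cl (gmul g1 x k) y.
Proof. by move=> cxy Kk; rewrite -[y](gmulx1 g2); apply: (graph_cl_mul cc). Qed.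

Lemma graph_cl_mulr_ker2 x y k : cl x y -> K2 k -> cl x (gmul g2 y k).
Proof.
by move=> cxy /graph_cl_kerC Kk; rewrite -[x](gmulx1 g1); apply: (graph_cl_mul cc).
Qed.

Lemma graph_cl_qmap_eq x y y' : cl x y -> cl x y' -> qmap g2 K2 y = qmap g2 K2 y'.
Proof.
move=> cxy cxy'; have Kk : K2 (gmul g2 (ginv g2 y) y').
  apply/graph_cl_kerC; rewrite -(gmulVx g1 x).
  by apply: (graph_cl_mul cc) => //; apply: (graph_cl_inv cc).
by rewrite -(qmap_mulr sgK2 y Kk) gmulA gmulxV gmul1x.
Qed.

Definition graph_quot_map (q : quot g1 K1) : quot g2 K2 :=
  qmap g2 K2 (sval (cid (graph_cl_exists cc (sval (cid (proj2_sig q)))))).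

Lemma graph_quot_mapE x y : cl x y -> graph_quot_map (qmap g1 K1 x) = qmap g2 K2 y.
Proof.
move=> cxy; rewrite /graph_quot_map; case: cid => x0 /= ex0; case: cid => y0 /= cx0y0.
have [k Kk ex] := coset_eq_mulr sgK1 ex0; rewrite ex in cx0y0.
exact: graph_cl_qmap_eq cx0y0 (graph_cl_mulr_ker1 cxy Kk).
Qed.

Lemma graph_quot_map_graph_cl x u :
  graph_quot_map (qmap g1 K1 x) = qmap g2 K2 u -> cl x u.
Proof.
have [y cxy] := graph_cl_exists cc x; rewrite (graph_quot_mapE cxy).
by move/(congr1 sval)/(coset_eq_mulr sgK2) => [k Kk ->]; apply: graph_cl_mulr_ker2.
Qed.

Lemma graph_quot_map_rho g : graph_quot_map (qmap g1 K1 (r1 g)) = qmap g2 K2 (r2 g).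
Proof. exact/graph_quot_mapE/graph_cl_rho. Qed.

Lemma graph_quot_map_mul x y u v :
  graph_quot_map (qmap g1 K1 x) = qmap g2 K2 u ->
  graph_quot_map (qmap g1 K1 y) = qmap g2 K2 v ->
  graph_quot_map (qmap g1 K1 (gmul g1 x y)) = qmap g2 K2 (gmul g2 u v).
Proof.
move=> /graph_quot_map_graph_cl cxu /graph_quot_map_graph_cl cyv.
exact/graph_quot_mapE/(graph_cl_mul cc).
Qed.

Lemma qopen_graph_quot_map_preimage V : qopen V -> qopen (graph_quot_map @^-1` V).
Proof.
rewrite /qopen => oV; rewrite openE => x Vx; apply: contrapT => nVx.
pose O := [set x | V (graph_quot_map (qmap g1 K1 x))].
pose Y U := [set y | exists2 x', U x' /\ ~ O x' & cl x' y].
have [||U|z [cxz meetY]] := @graph_cl_cluster _ _ _ _ _ _ _ _ cc x Y.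
- by move=> U U' sU y [x' [Ux' nOx'] cx'y]; exists x' => //; split => //; apply: sU.
- move=> U nU; have /existsNP [x' /not_implyP [Ux' nOx']] : ~ U `<=` O.
    by move=> sUO; apply: nVx; apply: filterS nU.
  by have [y cx'y] := graph_cl_exists cc x'; exists y, x'.
- by move=> y [x' [Ux' _] cx'y]; exists x'.
have nVz : nbhs z (qmap g2 K2 @^-1` V).
  by apply: open_nbhs_nbhs; split => //=; rewrite -(graph_quot_mapE cxz).
have [y [[x' [_ nOx'] cx'y] Vy]] := meetY _ _ filterT nVz.
by apply: nOx'; rewrite /O /= (graph_quot_mapE cx'y).
Qed.

End QuotientMap.

Lemma graph_quot_mapK (G : Type) (gG : group_law G) (H1 H2 : topologicalType)
    (g1 : group_law H1) (g2 : group_law H2) (r1 : G -> H1) (r2 : G -> H2)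
    (cc : compatible_completions gG g1 g2 r1 r2)
    (cc' : compatible_completions gG g2 g1 r2 r1) :
  cancel (graph_quot_map cc) (graph_quot_map cc').
Proof.
move=> q; have [x ->] := qmap_surj q; have [y cxy] := graph_cl_exists cc x.
by rewrite (graph_quot_mapE cc cxy) (graph_quot_mapE cc' (graph_cl_sym cxy)).
Qed.

Lemma graph_quot_map_iso (G : Type) (gG : group_law G) (H1 H2 : topologicalType)
    (g1 : group_law H1) (g2 : group_law H2) (r1 : G -> H1) (r2 : G -> H2)
    (cc : compatible_completions gG g1 g2 r1 r2) :
  quot_topgroup_iso (graph_quot_map cc).
Proof.
split; first exact: graph_quot_map_mul.
exists (graph_quot_map (compatible_completionsC cc)).
split; first exact: graph_quot_mapK.
split; first exact: graph_quot_mapK.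
by split; apply: qopen_graph_quot_map_preimage.
Qed.

Unset Implicit Arguments. Set Strict Implicit.

Theorem theoremC (R : realType) (X : Type) (d : X -> X -> R)
  (G : Type) (gG : group_law G) (act : G -> X -> X)
  (H1 : topologicalType) (g1 : group_law H1) (rho1 : G -> H1)
  (H2 : topologicalType) (g2 : group_law H2) (rho2 : G -> H2) :
  is_metric d -> quasi_geodesic d ->
  quasi_action d gG act -> cobounded d act ->
  topological_completion d gG act g1 rho1 ->
  topological_completion d gG act g2 rho2 ->
  exists (K1 : set H1) (K2 : set H2),
    compact K1 /\ normal_subgroup g1 K1 /\
    compact K2 /\ normal_subgroup g2 K2 /\
    exists lam : quot g1 K1 -> quot g2 K2,
      quot_topgroup_iso lam /\
      (forall g, lam (qmap g1 K1 (rho1 g)) = qmap g2 K2 (rho2 g)).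
Proof.
move=> _ _ _ _ c1 c2.
have cc := topological_completions_compatible c1 c2.
have cc' := compatible_completionsC cc.
exists (graph_cl_ker g2 rho1 rho2), (graph_cl_ker g1 rho2 rho1).
split; first exact: graph_cl_ker_compact cc.
split; first exact: graph_cl_ker_normal cc.
split; first exact: graph_cl_ker_compact cc'.
split; first exact: graph_cl_ker_normal cc'.
exists (graph_quot_map cc).
by split; [apply: graph_quot_map_iso | apply: graph_quot_map_rho].
Qed.
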